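(* Let $(a_i)_{i\ge0}$ be integers with $a_0=0$, $a_1=2$, $a_{2k}=4$ for all $k\geq1$, and $a_{2k+1}$ arbitrary positive integers for $k\ge1$. Let $\ell=[a_0;a_1,a_2,\dots]$ (an irrational number) and $\theta=e^{2/\ell}$. Then $\mathcal A_\theta$ is infinite. In particular, for every positive integer $c$, if $\theta=e^{4-c+\sqrt{c(c+1)}}$ then $\mathcal A_\theta$ is infinite.
   Context: $\lfloor x\rfloor$ is the floor of $x$; $\log$ is the natural logarithm. For real $\theta>1$ and positive integer $n$, $M'_\theta(n)=\left\lfloor 1/(\theta^{1/n}-1)\right\rfloor$, and $\mathcal A_\theta=\{n\in\mathbb N: M'_\theta(n)\neq \lfloor n/\log\theta-1/2\rfloor\}$, where $\mathbb N$ is the set of positive integers. $[a_0;a_1,a_2,\dots]$ denotes an infinite simple continued fraction. *)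

From Stdlib Require Import Reals ZArith.
Open Scope R_scope.

(* floor x : the greatest integer <= x  (up x is the unique integer with x < up x <= x + 1) *)
Definition floor (x : R) : Z := (up x - 1)%Z.

Fixpoint cf_tail (a : nat -> Z) (k n : nat) : R :=
  match n with
  | O => IZR (a k)
  | S m => IZR (a k) + / cf_tail a (S k) m
  end.

Definition cf_conv (a : nat -> Z) (n : nat) : R := cf_tail a 0 n.

Definition cf_value (a : nat -> Z) (l : R) : Prop := Un_cv (cf_conv a) l.

Definition Mprime (theta : R) (n : nat) : Z :=
  floor (/ (Rpower theta (/ INR n) - 1)).

Definition in_A (theta : R) (n : nat) : Prop :=
  (0 < n)%nat /\ Mprime theta n <> floor (INR n / ln theta - / 2).

Definition A_infinite (theta : R) : Prop :=
  forall N : nat, exists n : nat, (N < n)%nat /\ in_A theta n.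

From Pilot Require Import Defs.
From Coquelicot Require Import Coquelicot.
From Stdlib Require Import Reals ZArith Lra Lia Psatz.
Open Scope R_scope.

(* Put [theta = exp (2 / l)], so that [ln theta = 2 / l]. If [n l] lies just below
   an odd integer [2m+1], then [floor (n / ln theta - 1/2) = m - 1], whereas
   [M'_theta(n) = floor (1 / (e^x - 1))] with [x = 2 / (n l)], and [1 / (e^x - 1)]
   exceeds [1/x - 1/2] by at least [x / 32] for [x <= 1/4], enough to reach [m].
   The odd convergents [p/q] of [l] provide such [n = q]: they satisfy
   [0 < p - q l <= 1 / q'] where [q' >= 4 q] is the next denominator, and [p] is
   odd because all even-indexed partial quotients are even. For the second
   statement, taking every [a_(2k+1) = c] makes [l = 1 / (2 + tau)] with
   [tau = (sqrt (c (c + 1)) - c) / 2]. *)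

Lemma Derive_n_exp n y : Derive_n exp n y = exp y.
Proof. exact (is_derive_n_unique _ _ _ _ (is_derive_n_exp n y)). Qed.

Lemma ex_derive_n_exp n y : ex_derive_n exp n y.
Proof.
  destruct n as [|n]; [exact I|].
  apply ex_derive_ext with exp.
  - intros t. symmetry. apply Derive_n_exp.
  - exists (exp y). apply is_derive_Reals, derivable_pt_lim_exp.
Qed.

Lemma exp_le_cubic x : 0 < x -> exp x <= 1 + x + x ^ 2 / 2 + x ^ 3 / 6 * exp x.
Proof.
  intros Hx.
  destruct (Taylor_Lagrange exp 2 0 x Hx) as [z [[Hz0 Hzx] Heq]].
  { intros t _ k _. apply ex_derive_n_exp. }
  rewrite (sum_eq _ (fun m => (x - 0) ^ m / INR (Factorial.fact m) * exp 0)) in Heq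
    by (intros; now rewrite Derive_n_exp).
  rewrite Derive_n_exp, exp_0 in Heq. simpl in Heq.
  assert (exp z < exp x) by (apply exp_increasing; lra).
  assert (0 < x * (x * x)) by (apply Rmult_lt_0_compat; nra).
  rewrite Heq at 1. simpl. field_simplify. nra.
Qed.

Lemma inv_exp_sub_1_ge x : 0 < x <= / 4 -> / x - / 2 + x / 32 <= / (exp x - 1).
Proof.
  intros [Hx0 Hx4].
  set (g := x + x ^ 2 / 2 + x ^ 3 / 6).
  assert (Hg : 0 < g) by (unfold g; nra).
  assert (Hc : 0 < 1 - x ^ 3 / 6) by nra.
  assert (Hexp : exp x - 1 <= g / (1 - x ^ 3 / 6)).
  { apply Rmult_le_reg_r with (1 - x ^ 3 / 6); [exact Hc|].
    unfold Rdiv. rewrite Rmult_assoc, Rinv_l by lra.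
    pose proof (exp_le_cubic x Hx0). unfold g. lra. }
  assert (Hexp1 : 0 < exp x - 1) by (pose proof (exp_ineq1_le x); lra).
  apply Rle_trans with ((1 - x ^ 3 / 6) / g).
  - apply Rmult_le_reg_r with (x * g); [nra|].
    unfold g. field_simplify; [|nra..].
    assert (0 < x ^ 3) by (apply pow_lt; lra).
    assert (x ^ 3 * (4 * x ^ 2 + 76 * x - 40) <= 0) by nra.
    lra.
  - replace ((1 - x ^ 3 / 6) / g) with (/ (g / (1 - x ^ 3 / 6))) by (field; lra).
    apply Rinv_le_contravar; lra.
Qed.

Lemma floor_unique x z : IZR z <= x < IZR z + 1 -> Defs.floor x = z.
Proof.
  intros [H1 H2]. unfold Defs.floor.
  rewrite <- (tech_up x (z + 1)); [ring | |]; rewrite plus_IZR; simpl; lra.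
Qed.

Lemma le_floor x z : IZR z <= x -> (z <= Defs.floor x)%Z.
Proof.
  intros H. unfold Defs.floor. destruct (archimed x) as [Hup _].
  assert (IZR z < IZR (up x)) as Hz by lra. apply lt_IZR in Hz. lia.
Qed.

Lemma in_A_exp_of_odd_approx (l : R) (n : nat) (m : Z) :
  0 < l <= / 2 -> 8 <= INR n * l ->
  0 < 2 * IZR m + 1 - INR n * l <= / (4 * INR n) ->
  in_A (exp (2 / l)) n.
Proof.
  intros [Hl0 Hl2] Hnl [Hd0 Hd1].
  set (d := 2 * IZR m + 1 - INR n * l) in *.
  assert (Hn : 16 <= INR n) by nra.
  split; [apply INR_lt; simpl; lra|].
  set (x := / INR n * (2 / l)).
  assert (Hx : 0 < x <= / 4).
  { unfold x. split.
    - apply Rmult_lt_0_compat; [apply Rinv_0_lt_compat | apply Rdiv_lt_0_compat]; lra.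
    - replace (/ INR n * (2 / l)) with (/ (INR n * l / 2)) by (field; lra).
      apply Rinv_le_contravar; lra. }
  assert (Hd2 : d <= x / 16).
  { apply Rle_trans with (/ (4 * INR n)); [exact Hd1|].
    unfold x. replace (/ INR n * (2 / l) / 16) with (/ (8 * INR n * l)) by (field; lra).
    apply Rinv_le_contravar; nra. }
  unfold Mprime, Rpower. rewrite ln_exp. fold x.
  assert (Hfloor_right : Defs.floor (INR n / (2 / l) - / 2) = (m - 1)%Z).
  { apply floor_unique. rewrite minus_IZR. simpl IZR.
    replace (INR n / (2 / l) - / 2) with (IZR m - d / 2) by (unfold d; field; lra).
    lra. }
  assert (Hfloor_left : (m <= Defs.floor (/ (exp x - 1)))%Z).
  { apply le_floor. eapply Rle_trans; [|exact (inv_exp_sub_1_ge x Hx)].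
    replace (/ x) with (INR n * l / 2) by (unfold x; field; lra).
    unfold d in Hd2. lra. }
  rewrite Hfloor_right. lia.
Qed.

Lemma Un_cv_subseq (u : nat -> R) (f : nat -> nat) l :
  Un_cv u l -> (forall n, (n <= f n)%nat) -> Un_cv (fun n => u (f n)) l.
Proof.
  intros Hu Hf eps Heps. destruct (Hu eps Heps) as [N HN].
  exists N. intros n Hn. apply HN. specialize (Hf n). lia.
Qed.

Lemma Un_cv_of_dist_le_inv (u : nat -> R) l :
  (forall n, Rabs (u (S n) - l) <= / INR (S n)) -> Un_cv u l.
Proof.
  intros Hu eps Heps. destruct (archimed_cor1 eps Heps) as [N [HN HN0]].
  exists N. intros n Hn. destruct n as [|n]; [lia|].
  unfold R_dist. eapply Rle_lt_trans; [apply Hu|]. eapply Rle_lt_trans; [|exact HN].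
  apply Rinv_le_contravar; [apply lt_0_INR | apply le_INR]; lia.
Qed.

Section Continuants.

Variable a : nat -> Z.

(* Numerator and denominator of [a_k; a_(k+1), ..., a_(k+n)]; the inner match is
   [cont_den (S k) m], inlined to keep the recursion structural. *)
Fixpoint cont (k n : nat) : Z :=
  match n with
  | O => a k
  | S m => (a k * cont (S k) m + match m with O => 1 | S m' => cont (S (S k)) m' end)%Z
  end.

Definition cont_den (k n : nat) : Z :=
  match n with O => 1%Z | S m => cont (S k) m end.

Lemma cont_succ k m : cont k (S m) = (a k * cont (S k) m + cont_den (S k) m)%Z.
Proof. reflexivity. Qed.

Lemma cont_den_succ k m : cont_den k (S m) = cont (S k) m.
Proof. reflexivity. Qed.

(* The definition expands continuants along their first entry; this is the expansion
   along the last one, which yields the usual recurrences for [p_n] and [q_n]. *)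
Lemma cont_rec k n :
  cont k (S (S n)) = (a (S (S n) + k) * cont k (S n) + cont k n)%Z /\
  cont_den k (S (S n)) = (a (S (S n) + k) * cont_den k (S n) + cont_den k n)%Z.
Proof.
  revert k; induction n as [|n IH]; intros k.
  - simpl. split; ring.
  - destruct (IH (S k)) as [Hc Hd].
    replace (S (S n) + S k)%nat with (S (S (S n)) + k)%nat in Hc, Hd by lia.
    rewrite !(cont_succ k), !(cont_den_succ k), Hc, Hd. split; ring.
Qed.

Definition cf_num n := cont 0 n.
Definition cf_den n := cont_den 0 n.

Lemma cf_num_rec n : cf_num (S (S n)) = (a (S (S n)) * cf_num (S n) + cf_num n)%Z.
Proof. rewrite <- (Nat.add_0_r (S (S n))) at 2. apply (cont_rec 0 n). Qed.

Lemma cf_den_rec n : cf_den (S (S n)) = (a (S (S n)) * cf_den (S n) + cf_den n)%Z.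
Proof. rewrite <- (Nat.add_0_r (S (S n))) at 2. apply (cont_rec 0 n). Qed.

Lemma cf_det n :
  IZR (cf_num (S n)) * IZR (cf_den n) - IZR (cf_num n) * IZR (cf_den (S n)) = (-1) ^ n.
Proof.
  induction n as [|n IH].
  - unfold cf_num, cf_den. simpl. rewrite plus_IZR, mult_IZR. ring.
  - rewrite cf_num_rec, cf_den_rec, !plus_IZR, !mult_IZR, <- tech_pow_Rmult, <- IH. ring.
Qed.

Lemma cf_num_0 : cf_num 0 = a 0.
Proof. reflexivity. Qed.

Lemma cf_num_1 : cf_num 1 = (a 0 * a 1 + 1)%Z.
Proof. reflexivity. Qed.

Lemma cf_den_0 : cf_den 0 = 1%Z.
Proof. reflexivity. Qed.

Lemma cf_den_1 : cf_den 1 = a 1.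
Proof. reflexivity. Qed.

Definition convergent n := IZR (cf_num n) / IZR (cf_den n).

Hypothesis a_pos : forall j, (1 <= j)%nat -> (1 <= a j)%Z.

Lemma cont_pos k n : (1 <= k)%nat -> (1 <= cont k n)%Z /\ (1 <= cont_den k n)%Z.
Proof.
  revert k; induction n as [|n IH]; intros k Hk.
  - simpl. split; [apply a_pos, Hk | lia].
  - destruct (IH (S k) ltac:(lia)) as [Hc Hd].
    pose proof (a_pos k Hk).
    rewrite cont_succ, cont_den_succ. split; [nia | exact Hc].
Qed.

Lemma cf_tail_cont k n : cf_tail a k n = IZR (cont k n) / IZR (cont_den k n).
Proof.
  revert k; induction n as [|n IH]; intros k.
  - simpl. field.
  - destruct (cont_pos (S k) n ltac:(lia)) as [Hc Hd].
    apply IZR_le in Hc, Hd.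
    simpl cf_tail. rewrite IH, cont_succ, cont_den_succ, plus_IZR, mult_IZR.
    field. lra.
Qed.

Lemma cf_conv_eq n : cf_conv a n = convergent n.
Proof. apply cf_tail_cont. Qed.

Lemma cf_value_convergent l : cf_value a l <-> Un_cv convergent l.
Proof. split; apply Un_cv_ext; intros n; [|symmetry]; apply cf_conv_eq. Qed.

Lemma cf_den_ge n : (1 <= cf_den n)%Z /\ (Z.of_nat (S n) <= cf_den (S n))%Z.
Proof.
  induction n as [|n [IH1 IH2]].
  - rewrite cf_den_0, cf_den_1. split; [lia|]. apply (a_pos 1%nat); lia.
  - split; [lia|]. rewrite cf_den_rec. pose proof (a_pos (S (S n)) ltac:(lia)). nia.
Qed.

Lemma cf_den_pos n : 1 <= IZR (cf_den n).
Proof. apply IZR_le, (cf_den_ge n). Qed.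

Lemma convergent_succ n :
  convergent (S n) - convergent n = (-1) ^ n / (IZR (cf_den n) * IZR (cf_den (S n))).
Proof.
  unfold convergent. rewrite <- cf_det.
  pose proof (cf_den_pos n). pose proof (cf_den_pos (S n)). field. lra.
Qed.

Lemma convergent_succ_succ n :
  convergent (S (S n)) - convergent n
  = (-1) ^ n * IZR (a (S (S n))) / (IZR (cf_den n) * IZR (cf_den (S (S n)))).
Proof.
  assert (Hdet : IZR (cf_num (S (S n))) * IZR (cf_den n)
                 - IZR (cf_num n) * IZR (cf_den (S (S n))) = IZR (a (S (S n))) * (-1) ^ n).
  { rewrite <- cf_det, cf_num_rec, cf_den_rec, !plus_IZR, !mult_IZR. ring. }
  pose proof (cf_den_pos n). pose proof (cf_den_pos (S (S n))).
  unfold convergent. rewrite (Rmult_comm ((-1) ^ n)), <- Hdet. field. lra.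
Qed.

Lemma convergent_gap_pos n :
  0 < IZR (a (S (S n))) / (IZR (cf_den n) * IZR (cf_den (S (S n)))).
Proof.
  pose proof (cf_den_pos n). pose proof (cf_den_pos (S (S n))).
  pose proof (a_pos (S (S n)) ltac:(lia)) as Ha. apply IZR_le in Ha.
  apply Rdiv_lt_0_compat; nra.
Qed.

Lemma convergent_odd_lt j : convergent (S (S (S (2 * j)))) < convergent (S (2 * j)).
Proof.
  pose proof (convergent_succ_succ (S (2 * j))) as H. rewrite pow_1_odd in H.
  pose proof (convergent_gap_pos (S (2 * j))). unfold Rdiv in *. lra.
Qed.

Lemma convergent_even_lt j : convergent (2 * j) < convergent (S (S (2 * j))).
Proof.
  pose proof (convergent_succ_succ (2 * j)) as H. rewrite pow_1_even in H.
  pose proof (convergent_gap_pos (2 * j)). unfold Rdiv in *. lra.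
Qed.

Lemma cf_value_bounds l : cf_value a l ->
  forall j, convergent (2 * j) <= l < convergent (S (2 * j)).
Proof.
  intros Hl%cf_value_convergent j. split.
  - apply (growing_ineq (fun j => convergent (2 * j))).
    + intros k. replace (2 * S k)%nat with (S (S (2 * k))) by lia.
      apply Rlt_le, convergent_even_lt.
    + apply Un_cv_subseq; [exact Hl | lia].
  - eapply Rle_lt_trans; [|apply convergent_odd_lt].
    replace (S (S (S (2 * j)))) with (S (2 * S j)) by lia.
    apply (decreasing_ineq (fun j => convergent (S (2 * j)))).
    + intros k. replace (2 * S k)%nat with (S (S (2 * k))) by lia.
      apply Rlt_le, convergent_odd_lt.
    + apply Un_cv_subseq; [exact Hl | lia].
Qed.

Lemma cf_value_odd_error l : cf_value a l -> forall j,
  0 < IZR (cf_num (S (2 * j))) - IZR (cf_den (S (2 * j))) * l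
    <= / IZR (cf_den (S (S (2 * j)))).
Proof.
  intros Hl j.
  destruct (cf_value_bounds l Hl j) as [_ Hup].
  destruct (cf_value_bounds l Hl (S j)) as [Hlow _].
  replace (2 * S j)%nat with (S (S (2 * j))) in Hlow by lia.
  pose proof (convergent_succ (S (2 * j))) as Hstep. rewrite pow_1_odd in Hstep.
  pose proof (cf_den_pos (S (2 * j))). pose proof (cf_den_pos (S (S (2 * j)))).
  unfold convergent in *.
  set (P := IZR (cf_num (S (2 * j)))) in *. set (Q := IZR (cf_den (S (2 * j)))) in *.
  set (Q' := IZR (cf_den (S (S (2 * j))))) in *.
  replace (P - Q * l) with (Q * (P / Q - l)) by (field; lra).
  split.
  - apply Rmult_lt_0_compat; lra.
  - replace (/ Q') with (Q * (1 / (Q * Q'))) by (field; lra).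
    apply Rmult_le_compat_l; [lra|].
    unfold Rdiv in *. lra.
Qed.

Lemma convergent_succ_sub_mediant n u : 0 < u ->
  convergent (S n) - (IZR (cf_num (S n)) * u + IZR (cf_num n))
                     / (IZR (cf_den (S n)) * u + IZR (cf_den n))
  = (-1) ^ n / (IZR (cf_den (S n)) * (IZR (cf_den (S n)) * u + IZR (cf_den n))).
Proof.
  intros Hu. pose proof (cf_den_pos n). pose proof (cf_den_pos (S n)).
  rewrite <- cf_det. unfold convergent. field. split; nra.
Qed.

Section Tails.

Variables (t : nat -> R) (l : R).
Hypothesis t_pos : forall n, (1 <= n)%nat -> 0 < t n.
Hypothesis t_rec : forall n, (1 <= n)%nat -> t n = IZR (a n) + / t (S n).
Hypothesis l_eq : l = IZR (a 0) + / t 1%nat.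

Lemma tails_mediant n :
  l = (IZR (cf_num (S n)) * t (S (S n)) + IZR (cf_num n))
      / (IZR (cf_den (S n)) * t (S (S n)) + IZR (cf_den n)).
Proof.
  induction n as [|n IH].
  - rewrite l_eq, (t_rec 1%nat), cf_num_0, cf_num_1, cf_den_0, cf_den_1 by lia.
    pose proof (t_pos 2%nat ltac:(lia)). pose proof (a_pos 1%nat ltac:(lia)) as Ha.
    apply IZR_le in Ha. rewrite plus_IZR, mult_IZR.
    field. split; [nra | lra].
  - rewrite IH, (t_rec (S (S n))), cf_num_rec, cf_den_rec by lia.
    pose proof (t_pos (S (S (S n))) ltac:(lia)).
    pose proof (a_pos (S (S n)) ltac:(lia)) as Ha. apply IZR_le in Ha.
    pose proof (cf_den_pos n). pose proof (cf_den_pos (S n)).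
    rewrite !plus_IZR, !mult_IZR.
    set (u := t (S (S (S n)))) in *.
    assert (0 < / u) by (apply Rinv_0_lt_compat; lra).
    assert (0 < IZR (a (S (S n))) * IZR (cf_den (S n)) + IZR (cf_den n)) by nra.
    field. split; nra.
Qed.

Lemma cf_value_of_tails : cf_value a l.
Proof.
  apply cf_value_convergent, Un_cv_of_dist_le_inv. intros n.
  pose proof (t_pos (S (S n)) ltac:(lia)) as Hu.
  rewrite (tails_mediant n), (convergent_succ_sub_mediant n _ Hu).
  pose proof (cf_den_pos n). pose proof (cf_den_pos (S n)).
  destruct (cf_den_ge n) as [_ Hq]. apply IZR_le in Hq. rewrite <- INR_IZR_INZ in Hq.
  set (D := IZR (cf_den (S n)) * (IZR (cf_den (S n)) * t (S (S n)) + IZR (cf_den n))).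
  assert (HD : IZR (cf_den (S n)) <= D) by (unfold D; nra).
  unfold Rdiv. rewrite Rabs_mult, pow_1_abs, Rmult_1_l, Rabs_inv, Rabs_right by nra.
  pose proof (lt_0_INR (S n) ltac:(lia)). apply Rinv_le_contravar; lra.
Qed.

End Tails.

End Continuants.

Lemma cf_num_even (a : nat -> Z) :
  (forall n, Nat.even n = true -> Z.even (a n) = true) ->
  forall n, Z.even (cf_num a n) = Nat.even n.
Proof.
  intros Ha.
  enough (H : forall n, Z.even (cf_num a n) = Nat.even n
                        /\ Z.even (cf_num a (S n)) = Nat.even (S n)) by apply H.
  induction n as [|n [IH0 IH1]].
  - rewrite cf_num_0, cf_num_1, Z.even_add, Z.even_mul, (Ha 0%nat eq_refl).
    split; reflexivity.
  - split; [exact IH1|].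
    rewrite cf_num_rec, Z.even_add, Z.even_mul, IH0, IH1, Nat.even_succ, <- Nat.negb_even.
    change (Nat.even (S (S n))) with (Nat.even n).
    destruct (Nat.even n) eqn:E.
    + rewrite (Ha (S (S n)) E). reflexivity.
    + rewrite Bool.orb_true_r. reflexivity.
Qed.

Section TwoFour.

Variables (a : nat -> Z) (l : R).
Hypothesis a_0 : a 0%nat = 0%Z.
Hypothesis a_1 : a 1%nat = 2%Z.
Hypothesis a_even : forall k, (1 <= k)%nat -> a (2 * k)%nat = 4%Z.
Hypothesis a_odd : forall k, (1 <= k)%nat -> (0 < a (2 * k + 1)%nat)%Z.
Hypothesis l_value : cf_value a l.

Lemma two_four_pos j : (1 <= j)%nat -> (1 <= a j)%Z.
Proof.
  intros Hj. destruct (Nat.Even_or_Odd j) as [[k ->]|[[|k] ->]].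
  - rewrite a_even by lia. lia.
  - simpl. rewrite a_1. lia.
  - specialize (a_odd (S k) ltac:(lia)). lia.
Qed.

Lemma two_four_even n : Nat.even n = true -> Z.even (a n) = true.
Proof.
  intros Hn. apply Nat.even_spec in Hn as [[|k] ->].
  - simpl. now rewrite a_0.
  - now rewrite a_even by lia.
Qed.

Lemma two_four_range : 4 / 9 <= l < / 2.
Proof.
  destruct (cf_value_bounds a two_four_pos l l_value 0) as [_ Hup].
  destruct (cf_value_bounds a two_four_pos l l_value 1) as [Hlow _].
  pose proof (a_even 1%nat ltac:(lia)) as a_2. simpl in a_2.
  change (2 * 1)%nat with 2%nat in Hlow. change (S (2 * 0)) with 1%nat in Hup.
  unfold convergent in Hup, Hlow.
  rewrite cf_num_rec, cf_den_rec, cf_num_1, cf_den_1, cf_num_0, cf_den_0 in Hlow.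
  rewrite cf_num_1, cf_den_1 in Hup.
  rewrite a_0, a_1, a_2 in Hlow. rewrite a_0, a_1 in Hup. simpl in Hup, Hlow. lra.
Qed.

Lemma two_four_num_odd j : cf_num a (S (2 * j)) = (2 * Z.div2 (cf_num a (S (2 * j))) + 1)%Z.
Proof.
  rewrite (Z.div2_odd (cf_num a (S (2 * j)))) at 1.
  rewrite <- Z.negb_even, (cf_num_even a two_four_even), Nat.even_succ, Nat.odd_mul.
  reflexivity.
Qed.

Lemma two_four_den_next j :
  4 * IZR (cf_den a (S (2 * j))) + 1 <= IZR (cf_den a (S (S (2 * j)))).
Proof.
  rewrite cf_den_rec. replace (S (S (2 * j))) with (2 * S j)%nat by lia.
  rewrite a_even by lia. destruct (cf_den_ge a two_four_pos (2 * j)) as [Hq _].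
  apply IZR_le in Hq. rewrite plus_IZR, mult_IZR. lra.
Qed.

Lemma A_infinite_of_cf_value : A_infinite (exp (2 / l)).
Proof.
  intros N. set (j := (N + 9)%nat).
  set (P := cf_num a (S (2 * j))). set (Q := cf_den a (S (2 * j))).
  pose proof two_four_range as Hl. pose proof (two_four_den_next j) as HQ'.
  destruct (cf_value_odd_error a two_four_pos l l_value j) as [Herr0 Herr1].
  fold P Q in HQ', Herr0, Herr1.
  assert (HQ : (Z.of_nat (S (2 * j)) <= Q)%Z) by apply (cf_den_ge a two_four_pos (2 * j)).
  assert (HQR : 19 <= IZR Q).
  { apply IZR_le in HQ. rewrite <- INR_IZR_INZ, S_INR, mult_INR in HQ.
    unfold j in HQ. rewrite plus_INR in HQ. simpl in HQ. pose proof (pos_INR N). lra. }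
  exists (Z.to_nat Q). split; [lia|].
  assert (HnQ : INR (Z.to_nat Q) = IZR Q) by (rewrite INR_IZR_INZ, Z2Nat.id; [reflexivity | lia]).
  apply in_A_exp_of_odd_approx with (Z.div2 P); [lra | rewrite HnQ; nra |].
  assert (HP : P = (2 * Z.div2 P + 1)%Z) by apply two_four_num_odd.
  rewrite HnQ. rewrite HP, plus_IZR, mult_IZR in Herr0, Herr1.
  split; [lra|]. apply Rle_trans with (/ IZR (cf_den a (S (S (2 * j))))); [lra|].
  apply Rinv_le_contravar; lra.
Qed.

End TwoFour.

Definition two_four_cf (c : nat) (n : nat) : Z :=
  match n with
  | O => 0
  | 1%nat => 2
  | _ => if Nat.even n then 4 else Z.of_nat c
  end.

Lemma two_four_cf_ge2 c n : (2 <= n)%nat ->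
  two_four_cf c n = if Nat.even n then 4%Z else Z.of_nat c.
Proof. intros Hn. destruct n as [|[|n]]; [lia | lia | reflexivity]. Qed.

(* For [tau > 0] with [tau (tau + c) = c / 4], the tails of [[0; 2, 4, c, 4, c, ...]]
   are [2 + tau], then alternately [1 / tau] and [c + tau]. *)
Lemma cf_value_two_four (c : nat) (tau : R) : (1 <= c)%nat ->
  0 < tau -> tau * (tau + INR c) = INR c / 4 ->
  cf_value (two_four_cf c) (/ (2 + tau)).
Proof.
  intros Hc Htau Hquad.
  assert (HC : 1 <= INR c) by (apply (le_INR 1 c) in Hc; exact Hc).
  assert (Hpos : forall j, (1 <= j)%nat -> (1 <= two_four_cf c j)%Z).
  { intros [|[|j]] Hj; [lia | simpl; lia |].
    rewrite two_four_cf_ge2 by lia. destruct (Nat.even (S (S j))); lia. }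
  apply cf_value_of_tails with
    (t := fun n => match n with
                   | 1%nat => 2 + tau
                   | _ => if Nat.even n then / tau else INR c + tau
                   end); [exact Hpos | | | simpl; ring].
  - intros [|[|n]] Hn; [lia | lra |].
    destruct (Nat.even (S (S n))); [apply Rinv_0_lt_compat|]; lra.
  - intros [|[|n]] Hn; [lia | simpl; now rewrite Rinv_inv |].
    rewrite two_four_cf_ge2 by lia. rewrite (Nat.even_succ (S (S n))), <- Nat.negb_even.
    destruct (Nat.even (S (S n))); simpl negb; cbv iota.
    + apply (Rmult_eq_reg_l (tau * (INR c + tau))); [|nra].
      simpl IZR. field_simplify; [nra | lra | lra].
    + rewrite Rinv_inv, INR_IZR_INZ. reflexivity.
Qed.

Lemma A_infinite_exp_sqrt (c : nat) : (1 <= c)%nat ->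
  A_infinite (exp (4 - INR c + sqrt (INR c * (INR c + 1)))).
Proof.
  intros Hc.
  assert (HC : 1 <= INR c) by (apply (le_INR 1 c) in Hc; exact Hc).
  set (s := sqrt (INR c * (INR c + 1))).
  assert (Hs2 : s * s = INR c * (INR c + 1)) by (apply sqrt_sqrt; nra).
  assert (Hs0 : 0 <= s) by apply sqrt_pos.
  assert (Hs : INR c < s) by nra.
  set (tau := (s - INR c) / 2).
  replace (4 - INR c + s) with (2 / / (2 + tau)) by (unfold tau; field; lra).
  apply A_infinite_of_cf_value with (two_four_cf c); try reflexivity.
  - intros k Hk. rewrite two_four_cf_ge2, Nat.even_mul by lia. reflexivity.
  - intros k Hk. rewrite two_four_cf_ge2, Nat.even_add, Nat.even_mul by lia. simpl. lia.
  - apply cf_value_two_four; [exact Hc | unfold tau; lra | unfold tau; nra].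
Qed.

Theorem theorem6 :
  (forall (a : nat -> Z) (l : R),
      a 0%nat = 0%Z ->
      a 1%nat = 2%Z ->
      (forall k : nat, (1 <= k)%nat -> a (2 * k)%nat = 4%Z) ->
      (forall k : nat, (1 <= k)%nat -> (0 < a (2 * k + 1)%nat)%Z) ->
      cf_value a l ->
      A_infinite (exp (2 / l)))
  /\
  (forall c : nat, (1 <= c)%nat ->
      A_infinite (exp (4 - INR c + sqrt (INR c * (INR c + 1))))).
Proof. split; [exact A_infinite_of_cf_value | exact A_infinite_exp_sqrt]. Qed.
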